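(* Let $v_1\ge v_2>0$, $m\in\mathbb{Z}_{\ge1}$ and $0<b<m$. If a strategy profile $(X,Y)$ with $\mathbf{E}(X)=m$ and $\mathbf{E}(Y)=b$ is a Nash equilibrium of the discrete all-pay auction with valuations $v_1,v_2$, then $m=v_2/2$, $(X,Y)$ is a Nash equilibrium of the General Lotto game $\Gamma(m,b)$, and $X=U_{\mathrm{O}}^m$.
   Context: Discrete all-pay auction: two players, 1 and 2, value a prize at $v_1$ and $v_2$ respectively, where $v_1\ge v_2>0$. A (mixed) strategy is a probability distribution on $\mathbb{Z}_{\ge 0}$ with finite mean, identified with a $\mathbb{Z}_{\ge0}$-valued random variable; the two players' choices are independent. If player 1 uses $X$ and player 2 uses $Y$, the expected payoffs are $P^1(X,Y)=v_1\Pr(X>Y)+\frac{v_1}{2}\Pr(X=Y)-\mathbf{E}(X)$ and $P^2(Y,X)=v_2\Pr(Y>X)+\frac{v_2}{2}\Pr(X=Y)-\mathbf{E}(Y)$. A Nash equilibrium of the all-pay auction is a pair $(X,Y)$ with $P^1(X,Y)\ge P^1(X',Y)$ and $P^2(Y,X)\ge P^2(Y',X)$ for all strategies $X',Y'$. Discrete General Lotto game: for reals $a,b\ge 0$, in $\Gamma(a,b)$ player 1 chooses a distribution $X$ on $\mathbb{Z}_{\ge0}$ with $\mathbf{E}(X)=a$ and player 2 chooses a distribution $Y$ on $\mathbb{Z}_{\ge 0}$ with $\mathbf{E}(Y)=b$ (independently); the payoff to player 1 is $H(X,Y)=\Pr(X>Y)-\Pr(X<Y)$ and to player 2 is $H(Y,X)=-H(X,Y)$.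 A Nash equilibrium of $\Gamma(a,b)$ is a pair $(X,Y)$ from these strategy sets such that neither player can increase her payoff by switching to another strategy in her own strategy set. For $m\ge1$, $U_{\mathrm{O}}^m$ is the uniform distribution on $\{1,3,\dots,2m-1\}$. *)

From Stdlib Require Import Reals Arith.
From Coquelicot Require Import Coquelicot.
Open Scope R_scope.

Definition is_strategy (p : nat -> R) : Prop :=
  (forall n, 0 <= p n) /\ is_series p 1 /\ ex_series (fun n => INR n * p n).

Definition mean (p : nat -> R) : R := Series (fun n => INR n * p n).

(* Pr(X > Y) for independent X ~ p, Y ~ q *)
Definition Pr_gt (p q : nat -> R) : R :=
  Series (fun i => p i * Series (fun j => if (j <? i)%nat then q j else 0)).

(* Pr(X = Y) for independent X ~ p, Y ~ q *)
Definition Pr_eq (p q : nat -> R) : R := Series (fun i => p i * q i).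

Definition P1 (v1 : R) (p q : nat -> R) : R :=
  v1 * Pr_gt p q + v1 / 2 * Pr_eq p q - mean p.
Definition P2 (v2 : R) (q p : nat -> R) : R :=
  v2 * Pr_gt q p + v2 / 2 * Pr_eq p q - mean q.

Definition allpay_NE (v1 v2 : R) (p q : nat -> R) : Prop :=
  is_strategy p /\ is_strategy q /\
  (forall p', is_strategy p' -> P1 v1 p' q <= P1 v1 p q) /\
  (forall q', is_strategy q' -> P2 v2 q' p <= P2 v2 q p).

Definition H (p q : nat -> R) : R := Pr_gt p q - Pr_gt q p.

Definition lotto_strategy (a : R) (p : nat -> R) : Prop :=
  is_strategy p /\ mean p = a.

Definition lotto_NE (a b : R) (p q : nat -> R) : Prop :=
  lotto_strategy a p /\ lotto_strategy b q /\
  (forall p', lotto_strategy a p' -> H p' q <= H p q) /\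
  (forall q', lotto_strategy b q' -> H q' p <= H q p).

(* U_O^m : uniform on {1,3,...,2m-1} *)
Definition uniform_odd (m : nat) (n : nat) : R :=
  if (Nat.odd n && (n <? 2 * m)%nat)%bool then / INR m else 0.

(* Everything is expressed through win r k = Pr(R < k) + Pr(R = k)/2, the
   chance that bid k beats a bid drawn from r (ties split), and the identity
   E_p[win q] + E_q[win p] = 1.  Both all-pay payoffs and the Lotto payoff are
   affine in E_p[win q] and the means, so a deviation with the same mean that
   is profitable in one game is profitable in the other: this gives the Lotto
   equilibrium.  Player 1 deviating to U = U_O^m, for which 2m win U k <= k,
   shows 2m E_q[win p] <= b.  Player 2 deviating to mixtures with mean b that
   charge an arbitrary point k then forces 2m win p k <= k for every k, with
   equality on the support of p because E_p[win p] = 1/2.  In terms of the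
   cumulative sums of s = m p this "tight bound" forces the staircase profile
   of m U, so p = U.  Finally player 2's deviations to the bids 0 and 2m pin
   down m = v2/2.  Partial sums, expectations, win, U_O^m and the tight-bound
   lemma are developed first; the equilibrium section then assembles them. *)
From Stdlib Require Import Reals Lra Lia FunctionalExtensionality.
From Coquelicot Require Import Coquelicot.
Open Scope R_scope.

Lemma INR_double (n : nat) : INR (2 * n) = 2 * INR n.
Proof. rewrite mult_INR; simpl; ring. Qed.

Lemma lim_unique (u : nat -> R) (l1 l2 : R) :
  is_lim_seq u l1 -> is_lim_seq u l2 -> l1 = l2.
Proof.
  intros H1 H2. apply is_lim_seq_unique in H1, H2.
  rewrite H1 in H2. now injection H2.
Qed.

(* psum f n = f 0 + ... + f (n - 1); with this convention psum r k is the
   probability Pr(R < k) for a distribution r. *)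
Fixpoint psum (f : nat -> R) (n : nat) : R :=
  match n with O => 0 | S k => psum f k + f k end.

Lemma psum_S (f : nat -> R) (n : nat) : psum f (S n) = psum f n + f n.
Proof. reflexivity. Qed.

Lemma is_series_psum (f : nat -> R) (l : R) :
  is_series f l <-> is_lim_seq (psum f) l.
Proof.
  assert (Hsum : forall n, sum_n f n = psum f (S n)).
  { induction n as [|n IH]; [rewrite sum_O; simpl; ring|].
    rewrite sum_Sn, IH; simpl; unfold plus; simpl; ring. }
  split; intro H.
  - apply is_lim_seq_incr_1. eapply is_lim_seq_ext; [exact Hsum|exact H].
  - apply is_lim_seq_incr_1 in H. change (is_lim_seq (sum_n f) l).
    eapply is_lim_seq_ext; [|exact H]. intro n; symmetry; apply Hsum.
Qed.

Lemma psum_ext_lt (f g : nat -> R) (n : nat) :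
  (forall i, (i < n)%nat -> f i = g i) -> psum f n = psum g n.
Proof.
  induction n as [|n IH]; intro H; simpl; [reflexivity|].
  rewrite IH by (intros; apply H; lia). rewrite H by lia. reflexivity.
Qed.

Lemma psum_scal (c : R) (f : nat -> R) (n : nat) :
  psum (fun i => c * f i) n = c * psum f n.
Proof. induction n as [|n IH]; simpl; [ring|]. rewrite IH; ring. Qed.

Lemma psum_mono (f : nat -> R) (n k : nat) :
  (forall i, 0 <= f i) -> (n <= k)%nat -> psum f n <= psum f k.
Proof.
  intros H Hnk. induction Hnk as [|k _ IH]; simpl; [lra|].
  specialize (H k); lra.
Qed.

Lemma psum_le_series (f : nat -> R) (l : R) (n : nat) :
  (forall i, 0 <= f i) -> is_series f l -> psum f n <= l.
Proof.
  intros H Hs. apply (is_lim_seq_incr_compare (psum f)); [now apply is_series_psum|].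
  intro k; simpl. specialize (H k); lra.
Qed.

Lemma is_series_finite (f : nat -> R) (N : nat) :
  (forall i, (N <= i)%nat -> f i = 0) -> is_series f (psum f N).
Proof.
  intro H. apply is_series_psum.
  apply is_lim_seq_ext_loc with (fun _ => psum f N); [|apply is_lim_seq_const].
  exists N. intros n Hn. induction Hn as [|n Hn IH]; simpl; [reflexivity|].
  rewrite H by exact Hn. lra.
Qed.

Lemma series_eventually_const (f : nat -> R) (l c : R) (N : nat) :
  is_series f l -> (forall n, (N <= n)%nat -> psum f n = c) -> c = l.
Proof.
  intros Hs Hc. apply is_series_psum in Hs. apply (lim_unique (psum f)); [|exact Hs].
  apply is_lim_seq_ext_loc with (fun _ => c); [|apply is_lim_seq_const].
  exists N; intros n Hn; symmetry; auto.
Qed.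

Lemma nonneg_series_zero (f : nat -> R) :
  (forall i, 0 <= f i) -> is_series f 0 -> forall i, f i = 0.
Proof.
  intros H Hs i. pose proof (psum_le_series f 0 (S i) H Hs) as Hle. simpl in Hle.
  pose proof (psum_mono f 0 i H (Nat.le_0_l i)) as H0. simpl in H0.
  specialize (H i). lra.
Qed.

Lemma psum_injective (f g : nat -> R) :
  (forall n, psum f n = psum g n) -> forall i, f i = g i.
Proof. intros H i. pose proof (H (S i)) as Hi. simpl in Hi. rewrite (H i) in Hi. lra. Qed.

Definition expect (r f : nat -> R) : R := Series (fun i => r i * f i).

Lemma mean_expect (r : nat -> R) : mean r = expect r INR.
Proof. unfold mean, expect. apply Series_ext; intro; ring. Qed.

Lemma expect_comm (p q : nat -> R) : expect p q = expect q p.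
Proof. unfold expect; apply Series_ext; intro; ring. Qed.

Lemma expect_scal (r f : nat -> R) (c : R) :
  expect r (fun i => c * f i) = c * expect r f.
Proof. unfold expect. rewrite <- Series_scal_l. apply Series_ext; intro; ring. Qed.

Lemma expect_le (r f g : nat -> R) :
  (forall i, 0 <= r i) -> (forall i, 0 <= f i <= g i) ->
  ex_series (fun i => r i * g i) -> expect r f <= expect r g.
Proof.
  intros Hr Hfg Hg. apply Series_le; [|exact Hg]. intro i.
  specialize (Hr i); specialize (Hfg i). split; [|apply Rmult_le_compat_l]; nra.
Qed.

Lemma strategy_psum_le_1 (r : nat -> R) (n : nat) : is_strategy r -> psum r n <= 1.
Proof. intros [Hr0 [Hr1 _]]. exact (psum_le_series r 1 n Hr0 Hr1). Qed.

Lemma strategy_cum_bounds (r : nat -> R) (n : nat) : is_strategy r -> 0 <= psum r n <= 1.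
Proof.
  intro Hr. split; [|apply strategy_psum_le_1, Hr].
  exact (psum_mono r 0 n (proj1 Hr) (Nat.le_0_l n)).
Qed.

Lemma strategy_prob_bounds (r : nat -> R) (n : nat) : is_strategy r -> 0 <= r n <= 1.
Proof.
  intro Hr. pose proof (strategy_cum_bounds r n Hr).
  pose proof (strategy_psum_le_1 r (S n) Hr). simpl in *. pose proof (proj1 Hr n). lra.
Qed.

Lemma ex_expect_bounded (r f : nat -> R) :
  is_strategy r -> (forall i, 0 <= f i <= 1) -> ex_series (fun i => r i * f i).
Proof.
  intros [Hr0 [Hr1 _]] Hf.
  apply (@ex_series_le R_AbsRing R_CompleteNormedModule _ r); [|exists 1; exact Hr1].
  intro n. change (norm (r n * f n)) with (Rabs (r n * f n)).
  specialize (Hr0 n); specialize (Hf n).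
  rewrite Rabs_right by (apply Rle_ge, Rmult_le_pos; lra). nra.
Qed.

Lemma ex_expect_INR (r : nat -> R) : is_strategy r -> ex_series (fun i => r i * INR i).
Proof.
  intros [_ [_ Hr2]]. eapply ex_series_ext; [|exact Hr2]. intro; simpl; ring.
Qed.

Definition dirac (k : nat) (i : nat) : R := if Nat.eqb i k then 1 else 0.
Definition mix (a : R) (r1 r2 : nat -> R) (i : nat) : R := a * r1 i + (1 - a) * r2 i.

Lemma is_series_dirac (k : nat) (f : nat -> R) :
  is_series (fun i => dirac k i * f i) (f k).
Proof.
  assert (Hpsum : forall n, psum (fun i => dirac k i * f i) n = if (k <? n)%nat then f k else 0).
  { induction n as [|n IH]; simpl; [reflexivity|]. rewrite IH. unfold dirac.
    destruct (Nat.eqb_spec n k), (Nat.ltb_spec k n), (Nat.ltb_spec k (S n));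
      try lia; subst; ring. }
  replace (f k) with (psum (fun i => dirac k i * f i) (S k)).
  - apply is_series_finite. intros i Hi. unfold dirac.
    destruct (Nat.eqb_spec i k); [lia|ring].
  - rewrite Hpsum. destruct (Nat.ltb_spec k (S k)); [reflexivity|lia].
Qed.

Lemma expect_dirac (k : nat) (f : nat -> R) : expect (dirac k) f = f k.
Proof. apply is_series_unique, is_series_dirac. Qed.

Lemma dirac_strategy (k : nat) : is_strategy (dirac k).
Proof.
  split; [|split].
  - intro i; unfold dirac; destruct (Nat.eqb i k); lra.
  - eapply is_series_ext; [|apply (is_series_dirac k (fun _ => 1))]. intro; simpl; ring.
  - exists (INR k). eapply is_series_ext; [|apply is_series_dirac]. intro; simpl; ring.
Qed.

Lemma mean_dirac (k : nat) : mean (dirac k) = INR k.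
Proof. rewrite mean_expect. apply expect_dirac. Qed.

Lemma expect_mix (a : R) (r1 r2 f : nat -> R) :
  ex_series (fun i => r1 i * f i) -> ex_series (fun i => r2 i * f i) ->
  expect (mix a r1 r2) f = a * expect r1 f + (1 - a) * expect r2 f.
Proof.
  intros H1 H2. unfold expect, mix. rewrite <- !Series_scal_l, <- Series_plus.
  - apply Series_ext; intro; ring.
  - exact (ex_series_scal_l a _ H1).
  - exact (ex_series_scal_l (1 - a) _ H2).
Qed.

Lemma mix_strategy (a : R) (r1 r2 : nat -> R) :
  0 <= a <= 1 -> is_strategy r1 -> is_strategy r2 -> is_strategy (mix a r1 r2).
Proof.
  intros Ha [A0 [A1 A2]] [B0 [B1 B2]]. unfold mix. split; [|split].
  - intro i. specialize (A0 i); specialize (B0 i). nra.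
  - assert (Hl : is_series (fun i => a * r1 i + (1 - a) * r2 i) (a * 1 + (1 - a) * 1))
      by exact (is_series_plus _ _ _ _ (is_series_scal_l a _ _ A1) (is_series_scal_l (1 - a) _ _ B1)).
    assert (Hone : a * 1 + (1 - a) * 1 = 1) by ring. rewrite Hone in Hl. exact Hl.
  - assert (H : ex_series (fun n => a * (INR n * r1 n) + (1 - a) * (INR n * r2 n)))
      by exact (ex_series_plus _ _ (ex_series_scal_l a _ A2) (ex_series_scal_l (1 - a) _ B2)).
    eapply ex_series_ext; [|exact H]. intro; simpl; ring.
Qed.

Lemma mean_mix (a : R) (r1 r2 : nat -> R) :
  is_strategy r1 -> is_strategy r2 -> mean (mix a r1 r2) = a * mean r1 + (1 - a) * mean r2.
Proof. intros H1 H2. rewrite !mean_expect. apply expect_mix; apply ex_expect_INR; assumption. Qed.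

Definition win (r : nat -> R) (k : nat) : R := psum r k + r k / 2.

Lemma win_bounds (r : nat -> R) (k : nat) : is_strategy r -> 0 <= win r k <= 1.
Proof.
  intro Hr. pose proof (strategy_cum_bounds r k Hr). pose proof (strategy_cum_bounds r (S k) Hr).
  simpl in *. pose proof (proj1 Hr k). unfold win. lra.
Qed.

Lemma scaled_win (c : R) (r : nat -> R) (k : nat) :
  2 * c * win r k = psum (fun j => c * r j) k + psum (fun j => c * r j) (S k).
Proof. simpl. rewrite psum_scal. unfold win. field. Qed.

Lemma Pr_gt_expect (p q : nat -> R) : Pr_gt p q = expect p (psum q).
Proof.
  unfold Pr_gt, expect. apply Series_ext. intro i. f_equal.
  apply is_series_unique.
  replace (psum q i) with (psum (fun j => if (j <? i)%nat then q j else 0) i).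
  - apply is_series_finite. intros j Hj. destruct (Nat.ltb_spec j i); [lia|reflexivity].
  - apply psum_ext_lt. intros j Hj. destruct (Nat.ltb_spec j i); [reflexivity|lia].
Qed.

(* Finite form of the decomposition of Pr(X < n, Y < n) by max(X, Y). *)
Lemma psum_product (p q : nat -> R) (n : nat) :
  psum (fun i => p i * psum q i) n + psum (fun i => q i * psum p i) n
  + psum (fun i => p i * q i) n = psum p n * psum q n.
Proof. induction n as [|n IH]; simpl; [ring|]. nra. Qed.

Lemma expect_total (p q : nat -> R) : is_strategy p -> is_strategy q ->
  expect p (psum q) + expect q (psum p) + expect p q = 1.
Proof.
  intros Hp Hq.
  assert (Hlim : forall f, ex_series f -> is_lim_seq (psum f) (Series f))
    by (intros f Hf; apply is_series_psum, Series_correct, Hf).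
  pose proof (is_lim_seq_plus' _ _ _ _
    (is_lim_seq_plus' _ _ _ _
       (Hlim _ (ex_expect_bounded p _ Hp (fun n => strategy_cum_bounds q n Hq)))
       (Hlim _ (ex_expect_bounded q _ Hq (fun n => strategy_cum_bounds p n Hp))))
    (Hlim _ (ex_expect_bounded p _ Hp (fun n => strategy_prob_bounds q n Hq)))) as Hsum.
  pose proof (is_lim_seq_mult' _ _ _ _ (proj1 (is_series_psum _ _) (proj1 (proj2 Hp)))
                (proj1 (is_series_psum _ _) (proj1 (proj2 Hq)))) as Hprod.
  rewrite Rmult_1_l in Hprod. apply (lim_unique _ _ _ Hsum).
  eapply is_lim_seq_ext; [|exact Hprod]. intro n; symmetry; apply psum_product.
Qed.

Lemma expect_win (p q : nat -> R) : is_strategy p -> is_strategy q ->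
  expect p (win q) = expect p (psum q) + expect p q / 2.
Proof.
  intros Hp Hq. unfold expect, win.
  rewrite (Series_ext _ (fun i => p i * psum q i + / 2 * (p i * q i))) by (intro; field).
  rewrite Series_plus, Series_scal_l; [field| |].
  - exact (ex_expect_bounded p _ Hp (fun n => strategy_cum_bounds q n Hq)).
  - exact (ex_series_scal_l (/ 2) _ (ex_expect_bounded p _ Hp (fun n => strategy_prob_bounds q n Hq))).
Qed.

Lemma win_sum (p q : nat -> R) : is_strategy p -> is_strategy q ->
  expect p (win q) + expect q (win p) = 1.
Proof.
  intros Hp Hq. rewrite !expect_win by assumption. rewrite (expect_comm q p).
  pose proof (expect_total p q Hp Hq). lra.
Qed.

Lemma P1_expect (v : R) (p q : nat -> R) : is_strategy p -> is_strategy q ->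
  P1 v p q = v * expect p (win q) - mean p.
Proof.
  intros Hp Hq. unfold P1, Pr_eq. rewrite Pr_gt_expect, expect_win by assumption.
  fold (expect p q). field.
Qed.

Lemma self_win (p : nat -> R) : is_strategy p -> expect p (win p) = 1 / 2.
Proof. intro Hp. pose proof (win_sum p p Hp Hp). lra. Qed.

Lemma P2_P1 (v : R) (q p : nat -> R) : P2 v q p = P1 v q p.
Proof. unfold P1, P2, Pr_eq. rewrite (Series_ext (fun i => p i * q i) (fun i => q i * p i)) by (intro; ring). reflexivity. Qed.

Lemma H_expect (p q : nat -> R) : is_strategy p -> is_strategy q ->
  H p q = 2 * expect p (win q) - 1.
Proof.
  intros Hp Hq. unfold H. rewrite !Pr_gt_expect, expect_win by assumption.
  pose proof (expect_total p q Hp Hq). lra.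
Qed.

Lemma best_response_same_mean (v : R) (p q : nat -> R) :
  v > 0 -> is_strategy p -> is_strategy q ->
  (forall p', is_strategy p' -> P1 v p' q <= P1 v p q) ->
  forall p', is_strategy p' -> mean p' = mean p -> expect p' (win q) <= expect p (win q).
Proof.
  intros Hv Hp Hq Hbest p' Hp' Hmean. specialize (Hbest p' Hp').
  rewrite !P1_expect, Hmean in Hbest by assumption. apply (Rmult_le_reg_l v); lra.
Qed.

(* The cumulative profile of m * U_O^m: psum climbs by one at each odd
   point below 2m, so both psum (2n) and psum (2n+1) equal min n m. *)
Definition staircase (M : nat) (F : nat -> R) : Prop :=
  forall n, F (2 * n)%nat = INR (Nat.min n M) /\ F (S (2 * n)) = INR (Nat.min n M).

Lemma staircase_unique (M : nat) (F G : nat -> R) :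
  staircase M F -> staircase M G -> forall j, F j = G j.
Proof.
  intros HF HG j. destruct (Nat.Even_or_Odd j) as [[n ->]|[n ->]].
  - rewrite (proj1 (HF n)), (proj1 (HG n)). reflexivity.
  - rewrite Nat.add_1_r, (proj2 (HF n)), (proj2 (HG n)). reflexivity.
Qed.

Section UniformOdd.
Variable m : nat.
Hypothesis m_pos : (1 <= m)%nat.

Lemma INR_m_pos : 0 < INR m.
Proof. apply lt_0_INR; lia. Qed.

Lemma uniform_odd_even (n : nat) : uniform_odd m (2 * n) = 0.
Proof. unfold uniform_odd. rewrite Nat.odd_even. reflexivity. Qed.

Lemma uniform_odd_odd (n : nat) :
  uniform_odd m (S (2 * n)) = if (n <? m)%nat then / INR m else 0.
Proof.
  unfold uniform_odd. rewrite <- Nat.add_1_r, Nat.odd_odd, Bool.andb_true_l.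
  destruct (Nat.ltb_spec n m), (Nat.ltb_spec (2 * n + 1) (2 * m)); reflexivity || lia.
Qed.

Lemma uniform_odd_tail (i : nat) : (2 * m <= i)%nat -> uniform_odd m i = 0.
Proof.
  intro Hi. unfold uniform_odd. destruct (Nat.ltb_spec i (2 * m)); [lia|].
  rewrite Bool.andb_false_r. reflexivity.
Qed.

Lemma uniform_odd_staircase : staircase m (psum (fun j => INR m * uniform_odd m j)).
Proof.
  pose proof INR_m_pos. intro n. induction n as [|n [IHe IHo]].
  - simpl. unfold uniform_odd. simpl. split; ring.
  - assert (He : psum (fun j => INR m * uniform_odd m j) (2 * S n) = INR (Nat.min (S n) m)).
    { replace (2 * S n)%nat with (S (S (2 * n))) by lia. rewrite psum_S, IHo, uniform_odd_odd.
      destruct (Nat.ltb_spec n m).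
      - rewrite !Nat.min_l by lia. rewrite S_INR. field. lra.
      - rewrite !Nat.min_r by lia. ring. }
    split; [exact He|]. rewrite psum_S, He, uniform_odd_even. ring.
Qed.

Lemma uniform_odd_moment (n : nat) :
  INR m * psum (fun i => INR i * uniform_odd m i) (2 * n) = INR (Nat.min n m) ^ 2.
Proof.
  pose proof INR_m_pos. induction n as [|n IH]; [simpl; ring|].
  replace (2 * S n)%nat with (S (S (2 * n))) by lia.
  rewrite !psum_S, !Rmult_plus_distr_l, IH, uniform_odd_even, uniform_odd_odd.
  destruct (Nat.ltb_spec n m).
  - rewrite !Nat.min_l by lia. rewrite S_INR, INR_double, S_INR. field. lra.
  - rewrite !Nat.min_r by lia. ring.
Qed.

Lemma uniform_odd_mean_series : is_series (fun i => INR i * uniform_odd m i) (INR m).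
Proof.
  pose proof INR_m_pos.
  replace (INR m) with (psum (fun i => INR i * uniform_odd m i) (2 * m)).
  - apply is_series_finite. intros i Hi. rewrite uniform_odd_tail by exact Hi. ring.
  - pose proof (uniform_odd_moment m) as Hmom. rewrite Nat.min_id in Hmom.
    apply (Rmult_eq_reg_l (INR m)); [|lra]. rewrite Hmom. ring.
Qed.

Lemma uniform_odd_strategy : is_strategy (uniform_odd m).
Proof.
  pose proof INR_m_pos. split; [|split].
  - intro i. unfold uniform_odd. destruct (_ && _)%bool; [|lra].
    left; apply Rinv_0_lt_compat; assumption.
  - replace 1 with (psum (uniform_odd m) (2 * m)).
    + apply is_series_finite, uniform_odd_tail.
    + destruct (uniform_odd_staircase m) as [Htop _].
      rewrite psum_scal, Nat.min_id in Htop.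
      apply (Rmult_eq_reg_l (INR m)); [|lra]. rewrite Htop. ring.
  - exists (INR m). exact uniform_odd_mean_series.
Qed.

Lemma uniform_odd_mean : mean (uniform_odd m) = INR m.
Proof. apply is_series_unique, uniform_odd_mean_series. Qed.

Lemma uniform_odd_win (k : nat) : 2 * INR m * win (uniform_odd m) k <= INR k.
Proof.
  rewrite scaled_win. destruct (Nat.Even_or_Odd k) as [[n ->]|[n ->]].
  - rewrite (proj1 (uniform_odd_staircase n)), (proj2 (uniform_odd_staircase n)).
    rewrite <- plus_INR. apply le_INR. lia.
  - rewrite Nat.add_1_r, (proj2 (uniform_odd_staircase n)).
    replace (S (S (2 * n))) with (2 * S n)%nat by lia.
    rewrite (proj1 (uniform_odd_staircase (S n))), <- plus_INR. apply le_INR. lia.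
Qed.

End UniformOdd.

Section TightProfile.
Variable s : nat -> R.
Hypothesis s_nonneg : forall j, 0 <= s j.
Hypothesis s_bound : forall j, psum s j + psum s (S j) <= INR j.
Hypothesis s_tight : forall j, 0 < s j -> psum s j + psum s (S j) = INR j.

Lemma tight_no_even_atom (n : nat) :
  psum s (2 * n) = INR n -> psum s (S (2 * n)) = INR n.
Proof.
  intro Hn. pose proof (s_bound (2 * n)) as Hb. rewrite psum_S, Hn, INR_double in *.
  pose proof (s_nonneg (2 * n)). lra.
Qed.

(* If the level is still n at 2n+2, it stays n forever: a new atom at
   j >= 2n+2 would have to weigh j - 2n >= 2, violating the bound at j+1. *)
Lemma tight_frozen (n : nat) :
  psum s (S (S (2 * n))) = INR n ->
  forall j, (S (S (2 * n)) <= j)%nat -> psum s j = INR n.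
Proof.
  intros Hstart j Hj. induction Hj as [|j Hj IH]; [exact Hstart|].
  rewrite psum_S, IH. destruct (Rlt_or_le 0 (s j)) as [Hpos|Hzero].
  - exfalso. pose proof (s_tight j Hpos) as Ht. pose proof (s_bound (S j)) as Hb.
    rewrite psum_S, IH in Ht. rewrite !psum_S, IH, S_INR in Hb.
    pose proof (s_nonneg (S j)). apply le_INR in Hj.
    rewrite !S_INR, INR_double in Hj. lra.
  - pose proof (s_nonneg j). lra.
Qed.

Lemma tight_climb (M : nat) : is_series s (INR M) ->
  forall n, (n <= M)%nat -> psum s (2 * n) = INR n.
Proof.
  intros Hs n. induction n as [|n IH]; intro Hn; [reflexivity|].
  pose proof (tight_no_even_atom n (IH ltac:(lia))) as Hodd.
  replace (2 * S n)%nat with (S (S (2 * n))) by lia. rewrite psum_S, Hodd.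
  destruct (Rlt_or_le 0 (s (S (2 * n)))) as [Hpos|Hzero].
  - pose proof (s_tight _ Hpos) as Ht.
    rewrite (psum_S s (S (2 * n))), Hodd, S_INR, INR_double in Ht.
    rewrite S_INR. lra.
  - exfalso. assert (Hstuck : psum s (S (S (2 * n))) = INR n)
      by (rewrite psum_S, Hodd; pose proof (s_nonneg (S (2 * n))); lra).
    pose proof (series_eventually_const s _ _ _ Hs (tight_frozen n Hstuck)) as HnM.
    apply INR_eq in HnM. lia.
Qed.

Lemma tight_staircase (M : nat) : is_series s (INR M) -> staircase M (psum s).
Proof.
  intros Hs n. destruct (Nat.le_gt_cases n M) as [HnM|HMn].
  - rewrite Nat.min_l by exact HnM. pose proof (tight_climb M Hs n HnM) as He.
    split; [exact He|]. apply tight_no_even_atom, He.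
  - rewrite Nat.min_r by lia.
    assert (Htop : psum s (2 * M) = INR M) by (apply (tight_climb M Hs); lia).
    assert (Htail : forall j, (2 * M <= j)%nat -> psum s j = INR M).
    { intros j Hj. apply Rle_antisym; [exact (psum_le_series s _ j s_nonneg Hs)|].
      rewrite <- Htop. apply psum_mono; assumption. }
    split; apply Htail; lia.
Qed.

End TightProfile.

Section Equilibrium.
Variables (v1 v2 : R) (m : nat) (b : R) (p q : nat -> R).
Hypothesis v1_ge_v2 : v1 >= v2.
Hypothesis v2_pos : v2 > 0.
Hypothesis m_pos : (1 <= m)%nat.
Hypothesis b_pos : 0 < b.
Hypothesis b_lt_m : b < INR m.
Hypothesis mean_p : mean p = INR m.
Hypothesis mean_q : mean q = b.
Hypothesis equilibrium : allpay_NE v1 v2 p q.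

Lemma p_deviation (p' : nat -> R) :
  is_strategy p' -> mean p' = INR m -> expect p' (win q) <= expect p (win q).
Proof.
  destruct equilibrium as [Hp [Hq [Hbest _]]]. intros Hp' Hmean.
  apply (best_response_same_mean v1 p q); try assumption; [lra|congruence].
Qed.

Lemma q_deviation (q' : nat -> R) :
  is_strategy q' -> mean q' = b -> expect q' (win p) <= expect q (win p).
Proof.
  destruct equilibrium as [Hp [Hq [_ Hbest]]]. intros Hq' Hmean.
  apply (best_response_same_mean v2 q p); try assumption; [|congruence].
  intros r Hr. rewrite <- !P2_P1. apply Hbest, Hr.
Qed.

(* The Lotto payoff is affine in the winning chance, so the all-pay
   equilibrium conditions restricted to fixed means are the Lotto ones. *)
Lemma lotto_equilibrium : lotto_NE (INR m) b p q.
Proof.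
  destruct equilibrium as [Hp [Hq _]].
  split; [split; assumption|split; [split; assumption|split]].
  - intros p' [Hp' Hmean]. rewrite !H_expect by assumption.
    pose proof (p_deviation p' Hp' Hmean). lra.
  - intros q' [Hq' Hmean]. rewrite !H_expect by assumption.
    pose proof (q_deviation q' Hq' Hmean). lra.
Qed.

(* Player 1 deviating to U_O^m shows that q wins with chance at most b/(2m). *)
Lemma q_win_bound : 2 * INR m * expect q (win p) <= b.
Proof.
  destruct equilibrium as [Hp [Hq _]]. pose proof (INR_m_pos m m_pos).
  pose proof (uniform_odd_strategy m m_pos) as HU.
  pose proof (p_deviation _ HU (uniform_odd_mean m m_pos)).
  pose proof (win_sum _ _ HU Hq). pose proof (win_sum _ _ Hp Hq).
  assert (HUq : 2 * INR m * expect q (win (uniform_odd m)) <= b).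
  { rewrite <- mean_q, mean_expect, <- expect_scal.
    apply expect_le; [apply Hq| |apply ex_expect_INR, Hq].
    intro k. split; [|apply uniform_odd_win, m_pos].
    apply Rmult_le_pos; [lra|apply win_bounds, HU]. }
  apply Rle_trans with (2 * INR m * expect q (win (uniform_odd m))); [|exact HUq].
  apply Rmult_le_compat_l; lra.
Qed.

Lemma mean_b_win_bound (q' : nat -> R) :
  is_strategy q' -> mean q' = b -> 2 * INR m * expect q' (win p) <= b.
Proof.
  intros Hq' Hmean. pose proof (q_deviation q' Hq' Hmean).
  pose proof q_win_bound. pose proof (INR_m_pos m m_pos). nra.
Qed.

Lemma win_p_bound_by_mixing (k : nat) (t : R) (r : nat -> R) :
  0 < t <= 1 -> is_strategy r -> t * INR k + (1 - t) * mean r = b ->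
  mean r <= 2 * INR m * expect r (win p) -> 2 * INR m * win p k <= INR k.
Proof.
  intros Ht Hr Hmean Hrwin. destruct equilibrium as [Hp _].
  assert (Hmix : is_strategy (mix t (dirac k) r))
    by (apply mix_strategy; [lra|apply dirac_strategy|exact Hr]).
  assert (Hmix_mean : mean (mix t (dirac k) r) = b)
    by (rewrite mean_mix, mean_dirac by (apply dirac_strategy || exact Hr); exact Hmean).
  pose proof (mean_b_win_bound _ Hmix Hmix_mean) as Hbound.
  rewrite expect_mix, expect_dirac in Hbound
    by (apply ex_expect_bounded; [apply dirac_strategy || exact Hr|intro; apply win_bounds, Hp]).
  pose proof (Rmult_le_compat_l (1 - t) _ _ ltac:(lra) Hrwin).
  apply (Rmult_le_reg_l t); [lra|]. nra.
Qed.

Lemma win_p_bound (k : nat) : 2 * INR m * win p k <= INR k.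
Proof.
  destruct equilibrium as [Hp _]. pose proof (INR_m_pos m m_pos). pose proof (pos_INR k).
  destruct (Rlt_or_le (INR k) b) as [Hk|Hk].
  - apply (win_p_bound_by_mixing k ((INR m - b) / (INR m - INR k)) p); try assumption.
    + split; [apply Rdiv_lt_0_compat; lra|].
      apply (Rmult_le_reg_r (INR m - INR k)); [lra|]. field_simplify; lra.
    + rewrite mean_p. field. lra.
    + rewrite self_win, mean_p by exact Hp. lra.
  - apply (win_p_bound_by_mixing k (b / INR k) (dirac 0)); [|apply dirac_strategy| |].
    + split; [apply Rdiv_lt_0_compat; lra|].
      apply (Rmult_le_reg_r (INR k)); [lra|]. field_simplify; lra.
    + rewrite mean_dirac. simpl INR. field. lra.
    + rewrite mean_dirac, expect_dirac. simpl INR.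
      apply Rmult_le_pos; [lra|apply win_bounds, Hp].
Qed.

(* Since E_p[win p] = 1/2 and E p = m, the bound is tight on the support of p. *)
Lemma win_p_tight (j : nat) : 0 < p j -> 2 * INR m * win p j = INR j.
Proof.
  destruct equilibrium as [Hp _]. intro Hpos.
  set (slack := fun i => p i * INR i + - (2 * INR m) * (p i * win p i)).
  assert (Hex : ex_series slack).
  { assert (HW : ex_series (fun i => - (2 * INR m) * (p i * win p i)))
      by exact (ex_series_scal_l _ _ (ex_expect_bounded p _ Hp (fun i => win_bounds p i Hp))).
    exact (ex_series_plus _ _ (ex_expect_INR p Hp) HW). }
  assert (Hsum : Series slack = 0).
  { unfold slack. rewrite Series_plus, Series_scal_l.
    - fold (expect p INR). fold (expect p (win p)).
      rewrite <- mean_expect, mean_p, self_win by exact Hp. field.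
    - apply ex_expect_INR, Hp.
    - exact (ex_series_scal_l _ _ (ex_expect_bounded p _ Hp (fun i => win_bounds p i Hp))). }
  assert (Hnonneg : forall i, 0 <= slack i).
  { intro i. unfold slack. pose proof (win_p_bound i). pose proof (proj1 Hp i). nra. }
  pose proof (nonneg_series_zero slack Hnonneg
                ltac:(rewrite <- Hsum; apply Series_correct, Hex) j) as Hj.
  unfold slack in Hj. nra.
Qed.

Lemma p_staircase : staircase m (psum (fun j => INR m * p j)).
Proof.
  destruct equilibrium as [Hp _]. pose proof (INR_m_pos m m_pos).
  apply tight_staircase.
  - intro j. apply Rmult_le_pos; [lra|apply (proj1 Hp)].
  - intro j. rewrite <- scaled_win. apply win_p_bound.
  - intros j Hj. rewrite <- scaled_win. apply win_p_tight.
    apply (Rmult_lt_reg_l (INR m)); lra.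
  - assert (Hs : is_series (fun j => INR m * p j) (INR m * 1))
      by exact (is_series_scal_l _ _ _ (proj1 (proj2 Hp))).
    rewrite Rmult_1_r in Hs. exact Hs.
Qed.

Lemma p_is_uniform_odd : p = uniform_odd m.
Proof.
  pose proof (INR_m_pos m m_pos). apply functional_extensionality. intro j.
  apply (Rmult_eq_reg_l (INR m)); [|lra].
  apply (psum_injective (fun j => INR m * p j) (fun j => INR m * uniform_odd m j)).
  apply (staircase_unique m); [exact p_staircase|exact (uniform_odd_staircase m m_pos)].
Qed.

(* Player 2's deviations to the bids 0 and 2m pin down the value m = v2/2. *)
Lemma value_half : INR m = v2 / 2.
Proof.
  destruct equilibrium as [Hp [Hq [_ Hbest]]]. pose proof (INR_m_pos m m_pos).
  assert (Hpay : forall r, is_strategy r -> P2 v2 r p = v2 * expect r (win p) - mean r)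
    by (intros r Hr; rewrite P2_P1; apply P1_expect; assumption).
  assert (Hwin_top : win p (2 * m) = 1).
  { pose proof (scaled_win (INR m) p (2 * m)) as Hs.
    destruct (p_staircase m) as [He Ho]. rewrite He, Ho, Nat.min_id in Hs.
    apply (Rmult_eq_reg_l (2 * INR m)); lra. }
  pose proof (Hbest _ (dirac_strategy (2 * m))) as Htop.
  pose proof (Hbest _ (dirac_strategy 0)) as Hzero.
  rewrite !Hpay, !expect_dirac, !mean_dirac, mean_q in Htop, Hzero
    by (apply dirac_strategy || assumption).
  rewrite Hwin_top, INR_double in Htop. simpl INR in Hzero.
  pose proof q_win_bound as Hc. set (c := expect q (win p)) in *.
  assert (Hw0 : 0 <= v2 * win p 0) by (apply Rmult_le_pos; [lra|apply win_bounds, Hp]).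
  destruct (Rtotal_order v2 (2 * INR m)) as [Hlt|[Heq|Hgt]]; [exfalso|lra|exfalso].
  - assert (Hcpos : 0 < c) by (apply (Rmult_lt_reg_l v2); lra).
    pose proof (Rmult_lt_compat_r c _ _ Hcpos Hlt). lra.
  - assert (Hc1 : c < 1).
    { destruct (Rlt_or_le c 1) as [Hlt1|Hge1]; [exact Hlt1|].
      pose proof (Rmult_le_compat_l (2 * INR m) _ _ ltac:(lra) Hge1). lra. }
    pose proof (Rmult_lt_compat_r (1 - c) _ _ ltac:(lra) Hgt). nra.
Qed.

End Equilibrium.

Theorem lemma1 (v1 v2 : R) (m : nat) (b : R) (p q : nat -> R) :
  v1 >= v2 -> v2 > 0 -> (1 <= m)%nat -> 0 < b -> b < INR m ->
  mean p = INR m -> mean q = b ->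
  allpay_NE v1 v2 p q ->
  INR m = v2 / 2 /\ lotto_NE (INR m) b p q /\ p = uniform_odd m.
Proof.
  intros Hv Hv2 Hm Hb Hbm Hmp Hmq Hne. split; [|split].
  - eapply value_half; eassumption.
  - eapply lotto_equilibrium; eassumption.
  - eapply p_is_uniform_odd; eassumption.
Qed.
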